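(* Let $A=(0,0)$, $B=(1,0)$, $C=(1,1)$, $D=(0,1)$ be the vertices of the unit square in the Euclidean plane $\mathbb{R}^2$. There is no point $P$ lying on the boundary of this square (that is, on one of its four edges $AB$, $BC$, $CD$, $DA$) such that the four Euclidean distances $|PA|$, $|PB|$, $|PC|$, $|PD|$ are all rational numbers.
   Context: Distances are ordinary Euclidean distances in $\mathbb{R}^2$. *)

From Stdlib Require Import Reals QArith Qreals.
Open Scope R_scope.

Definition dist2 (p q : R * R) : R :=
  sqrt ((fst p - fst q) ^ 2 + (snd p - snd q) ^ 2).

Definition is_rational (x : R) : Prop := exists q : Q, Q2R q = x.

Definition ptA : R * R := (0, 0).
Definition ptB : R * R := (1, 0).
Definition ptC : R * R := (1, 1).
Definition ptD : R * R := (0, 1).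

Definition on_square_boundary (P : R * R) : Prop :=
  (0 <= fst P <= 1 /\ snd P = 0) \/
  (fst P = 1 /\ 0 <= snd P <= 1) \/
  (0 <= fst P <= 1 /\ snd P = 1) \/
  (fst P = 0 /\ 0 <= snd P <= 1).

From Stdlib Require Import Reals QArith Qreals.
From Stdlib Require Import ZArith Znumtheory Lia Psatz Lra.
Open Scope R_scope.

(* On the edge AB a point is (s, 0) with 0 <= s <= 1, and its four distances are
   s, 1 - s, sqrt(s^2 + 1) and sqrt((1 - s)^2 + 1); the other edges are the same
   up to symmetry.  Clearing denominators, rationality would give integers
   0 <= a <= c, c > 0, with a^2 + c^2 and (c - a)^2 + c^2 both perfect squares.
   Dividing out gcd(a, c - a) and a parity argument reduce this to coprime odd
   a, b with a + b = 2h; parametrising the two Pythagorean triples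
   (a, 2h, U) and (b, 2h, V) produces a nonzero solution of
       x^4 + 3 x^2 y^2 + y^4 = z^2,
   which is impossible by Fermat-style infinite descent on |x y|. *)

Local Open Scope Z_scope.

Lemma coprime_intro x y :
  (forall d, (d | x) -> (d | y) -> (d | 1)) -> Z.gcd x y = 1.
Proof.
  intros H. apply Z.divide_1_r_nonneg; [apply Z.gcd_nonneg|].
  apply H; [apply Z.gcd_divide_l | apply Z.gcd_divide_r].
Qed.

Lemma coprime_common_divisor x y d :
  Z.gcd x y = 1 -> (d | x) -> (d | y) -> (d | 1).
Proof. intros H H1 H2. rewrite <- H. apply Z.gcd_greatest; assumption. Qed.

Lemma coprime_mul_r a b c :
  Z.gcd a b = 1 -> Z.gcd a c = 1 -> Z.gcd a (b * c) = 1.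
Proof.
  intros H1 H2. apply Zgcd_1_rel_prime.
  apply rel_prime_mult; apply Zgcd_1_rel_prime; assumption.
Qed.

Lemma coprime_not_both_even x y :
  Z.gcd x y = 1 -> Z.Even x -> Z.Even y -> False.
Proof.
  intros H [k Hk] [l Hl].
  assert (H2 : (2 | 1)).
  { apply (coprime_common_divisor x y); [assumption | exists k | exists l]; lia. }
  apply Z.divide_1_r in H2. lia.
Qed.

Lemma gcd_factor a b : Z.gcd a b <> 0 ->
  exists a' b', a = a' * Z.gcd a b /\ b = b' * Z.gcd a b /\ Z.gcd a' b' = 1.
Proof.
  intros Hd.
  destruct (Z.gcd_divide_l a b) as [a' Ha'].
  destruct (Z.gcd_divide_r a b) as [b' Hb'].
  exists a', b'. split; [exact Ha' | split; [exact Hb'|]].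
  pose proof (Z.gcd_nonneg a b).
  pose proof (Z.gcd_mul_mono_r a' b' (Z.gcd a b)) as E.
  rewrite <- Ha', <- Hb', Z.abs_eq in E by lia. nia.
Qed.

Lemma prime_5 : prime 5.
Proof.
  apply prime_intro; [lia|]. intros n Hn. apply Zgcd_1_rel_prime.
  assert (n = 1 \/ n = 2 \/ n = 3 \/ n = 4) as [-> | [-> | [-> | ->]]] by lia;
    reflexivity.
Qed.

Lemma square_inj_nonneg a b : 0 <= a -> 0 <= b -> a * a = b * b -> a = b.
Proof. intros. nia. Qed.

Lemma square_mod8 x : (exists k, x * x = 4 * (k * k)) \/ (exists i, x * x = 8 * i + 1).
Proof.
  destruct (Z.Even_or_Odd x) as [[k ->]|[k ->]]; [left; exists k; ring|right].
  destruct (Z.Even_or_Odd k) as [[m ->]|[m ->]].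
  - exists (m * (2 * m + 1)). ring.
  - exists ((2 * m + 1) * (m + 1)). ring.
Qed.

Lemma odd_square x : Z.Odd x -> exists i, x * x = 8 * i + 1.
Proof.
  intros [k ->]. destruct (square_mod8 (2 * k + 1)) as [[m Hm]|]; [lia | assumption].
Qed.

(* If X^2 - M^2 = 4N then X - M and X + M (which have the same parity) are both
   even, and their halves P, Q satisfy P Q = N, X = P + Q and M = Q - P. *)
Lemma half_factorization X M N : (X - M) * (X + M) = 4 * N ->
  exists P Q, P * Q = N /\ X = P + Q /\ M = Q - P.
Proof.
  intros E. destruct (Z.Even_or_Odd (X - M)) as [[k Hk]|[k Hk]].
  - exists k, (k + M). repeat split; [| lia | lia].
    replace (X + M) with (2 * (k + M)) in E by lia. rewrite Hk in E. lia.
  - exfalso. replace (X + M) with (2 * k + 1 + 2 * M) in E by lia.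
    rewrite Hk in E. ring_simplify in E. lia.
Qed.

Lemma coprime_product_square x y z :
  0 <= x -> 0 <= y -> Z.gcd x y = 1 -> x * y = z * z -> exists p, 0 <= p /\ x = p * p.
Proof.
  intros Hx Hy Hg E.
  destruct (Z.eq_dec (Z.gcd x z) 0) as [H0|H0].
  { apply Z.gcd_eq_0 in H0. exists 0. lia. }
  pose proof (Z.gcd_nonneg x z) as Hp.
  set (p := Z.gcd x z) in *.
  destruct (gcd_factor x z H0) as [x' [z' [Hx' [Hz' Hg']]]]. fold p in Hx', Hz'.
  exists p. split; [exact Hp|].
  assert (E' : x' * y = p * (z' * z')).
  { apply (Z.mul_reg_l _ _ p); [exact H0|]. nia. }
  assert (D1 : (x' | p)).
  { apply (Z.gauss _ (z' * z')); [exists y; lia | apply coprime_mul_r; exact Hg']. }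
  assert (D2 : (p | x')).
  { apply (Z.gauss _ y); [exists (z' * z'); lia|].
    apply coprime_intro. intros d Hdp Hdy.
    apply (coprime_common_divisor x y); [exact Hg | | exact Hdy].
    apply (Z.divide_trans _ p); [exact Hdp | exists x'; exact Hx']. }
  assert (Exp : x' = p) by (apply Z.divide_antisym_nonneg; [nia | exact Hp | exact D1 | exact D2]).
  rewrite Hx', Exp. reflexivity.
Qed.

Lemma coprime_product_fourth_power x y z :
  0 <= x -> 0 <= y -> Z.gcd x y = 1 -> x * y = z * z * z * z ->
  exists u v, 0 <= u /\ 0 <= v /\ x = u * u * u * u /\ y = v * v * v * v /\
              u * v * (u * v) = z * z.
Proof.
  intros Hx Hy Hg E.
  destruct (coprime_product_square x y (z * z)) as [p [Hp Ep]]; [assumption.. | lia |].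
  destruct (coprime_product_square y x (z * z)) as [q [Hq Eq]];
    [assumption.. | rewrite Z.gcd_comm; assumption | lia |].
  assert (Hpq : p * q = z * z) by (apply square_inj_nonneg; nia).
  assert (Hg' : Z.gcd p q = 1).
  { apply coprime_intro. intros d H1 H2. apply (coprime_common_divisor x y); [exact Hg | |].
    - rewrite Ep. apply Z.divide_mul_l. exact H1.
    - rewrite Eq. apply Z.divide_mul_l. exact H2. }
  destruct (coprime_product_square p q z) as [u [Hu Eu]]; [assumption.. |].
  destruct (coprime_product_square q p z) as [v [Hv Ev]];
    [assumption.. | rewrite Z.gcd_comm; assumption | lia |].
  exists u, v. subst. repeat split; try assumption; nia.
Qed.

Lemma square_quotient a X W : a <> 0 -> a * a * X = W * W -> exists M, X = M * M.
Proof.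
  intros Ha E.
  assert (Hg : Z.gcd a W <> 0) by (intros H; apply Z.gcd_eq_0 in H; lia).
  pose proof (Z.gcd_nonneg a W).
  destruct (gcd_factor a W Hg) as [a' [w' [Ha' [Hw' Hg']]]].
  set (g := Z.gcd a W) in *.
  assert (E' : a' * a' * X = w' * w').
  { apply (Z.mul_reg_l _ _ (g * g)); [nia|]. rewrite Ha', Hw' in E. nia. }
  assert (D : (a' | 1)).
  { apply (coprime_common_divisor a' w'); [exact Hg' | apply Z.divide_refl |].
    apply (Z.gauss _ w'); [exists (a' * X); lia | exact Hg']. }
  exists w'. rewrite <- E'. apply Z.divide_1_r in D. destruct D as [-> | ->]; ring.
Qed.

Lemma pythagorean_parametrization a h U :
  0 <= a -> Z.gcd a (2 * h) = 1 -> 0 < h -> U * U = a * a + 2 * h * (2 * h) ->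
  exists p q, 0 <= p /\ 0 <= q /\ a = p * p - q * q /\ h = p * q.
Proof.
  intros Ha Hg Hh E.
  rewrite <- Z.abs_square in E. set (U' := Z.abs U) in E.
  assert (HU : a <= U') by (assert (0 <= U') by lia; nia).
  destruct (half_factorization U' a (h * h)) as [Q [P [EQP [HU' Ha']]]]; [nia|].
  assert (HQ : 0 <= Q) by lia.
  assert (HP : 0 <= P) by lia.
  assert (HgPQ : Z.gcd P Q = 1).
  { apply coprime_intro. intros d D1 D2.
    apply (coprime_common_divisor a (2 * h * (2 * h))); [apply coprime_mul_r; exact Hg| |].
    - rewrite Ha'. apply Z.divide_sub_r; assumption.
    - replace (2 * h * (2 * h)) with (4 * (P * Q)) by lia.
      apply Z.divide_mul_r, Z.divide_mul_l. exact D1. }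
  destruct (coprime_product_square P Q h) as [p [Hp Ep]]; [assumption.. | lia |].
  destruct (coprime_product_square Q P h) as [q [Hq Eq]];
    [assumption.. | rewrite Z.gcd_comm; assumption | assumption |].
  exists p, q. split; [exact Hp | split; [exact Hq | split; [lia|]]].
  symmetry. apply square_inj_nonneg; [nia | lia | nia].
Qed.

Definition quartic (f g : Z) : Z := f*f*f*f + 3*(f*f)*(g*g) + g*g*g*g.

Lemma quartic_sym f g : quartic f g = quartic g f.
Proof. unfold quartic; ring. Qed.

(* For x, y odd the form is 5 mod 8, hence not a square. *)
Lemma quartic_odd_odd f g M : Z.Odd f -> Z.Odd g -> M * M <> quartic f g.
Proof.
  intros Hf Hg E. unfold quartic in E.
  destruct (odd_square f Hf) as [i Hi]. destruct (odd_square g Hg) as [j Hj].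
  rewrite Hi, Hj in E.
  destruct (square_mod8 M) as [[m Hm]|[m Hm]]; rewrite Hm in E; lia.
Qed.

(* A parity obstruction excluding the branch of odd_case_step in which both
   halves of the factorisation are negative. *)
Lemma odd_case_negative_branch f1 g1 v f :
  v * v = 3 * (f1*g1 * (f1*g1)) - f1*f1*f1*f1 - g1*g1*g1*g1 -> Z.Odd f ->
  f * f = 5 * (f1*g1)^4 - 6 * (f1*g1)^2 * (v*v) + v*v*v*v -> False.
Proof.
  intros E2 [n ->] E1.
  destruct (Z.Even_or_Odd f1) as [[k ->]|[k ->]];
  destruct (Z.Even_or_Odd g1) as [[l ->]|[l ->]];
  destruct (Z.Even_or_Odd v) as [[m ->]|[m ->]]; lia.
Qed.

(* Second half of a descent step: if u, v are coprime and
   5u^4 - 6u^2v^2 + v^4 is an odd square f^2, then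
   (v^2 - 3u^2)^2 - f^2 = 4u^4 splits u^4 into coprime fourth powers
   f1^4, g1^4, so that u = f1 g1 and v^2 = quartic f1 g1. *)
Lemma odd_case_step u v f :
  0 <= u -> 0 <= v -> Z.gcd u v = 1 -> u <> 0 -> Z.Odd f ->
  f * f = 5 * u^4 - 6 * u^2 * (v * v) + v * v * v * v ->
  exists f1 g1, f1 <> 0 /\ g1 <> 0 /\ f1 * g1 = u /\ v * v = quartic f1 g1.
Proof.
  intros Hu Hv Hg Hu0 Hf E.
  destruct (half_factorization (v * v - 3 * (u * u)) f (u * u * u * u))
    as [P [Q [EPQ [HY _]]]]; [nia|].
  assert (HgPQ : Z.gcd P Q = 1).
  { apply coprime_intro. intros d D1 D2.
    assert (Hdu : Z.gcd d u = 1).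
    { apply coprime_intro. intros c C1 C2.
      apply (coprime_common_divisor u (v * v)); [apply coprime_mul_r; exact Hg | exact C2|].
      replace (v * v) with (P + Q + 3 * (u * u)) by lia.
      repeat apply Z.divide_add_r; try (apply (Z.divide_trans _ d); assumption).
      apply Z.divide_mul_r, Z.divide_mul_l. exact C2. }
    apply (Z.gauss _ (u * u * u * u)); [| repeat apply coprime_mul_r; exact Hdu].
    rewrite <- EPQ, Z.mul_1_r. apply Z.divide_mul_l. exact D1. }
  assert (Hu4 : 0 < u * u * u * u) by (assert (0 < u) by lia; nia).
  destruct (Z.lt_ge_cases 0 P) as [HP|HP].
  - destruct (coprime_product_fourth_power P Q u) as [f1 [g1 [Hf1 [Hg1 [E1 [E2 E3]]]]]];
      [lia | nia | exact HgPQ | lia |].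
    assert (Hfg : f1 * g1 = u) by (apply square_inj_nonneg; nia).
    exists f1, g1. repeat split; [intros ->; lia | intros ->; lia | exact Hfg |].
    unfold quartic. replace (v * v) with (P + Q + 3 * (u * u)) by lia.
    rewrite E1, E2, <- Hfg. ring.
  - exfalso.
    destruct (coprime_product_fourth_power (- P) (- Q) u) as [f1 [g1 [Hf1 [Hg1 [E1 [E2 E3]]]]]];
      [nia | nia | rewrite Z.gcd_opp_l, Z.gcd_opp_r; exact HgPQ | lia |].
    assert (Hfg : f1 * g1 = u) by (apply square_inj_nonneg; nia).
    apply (odd_case_negative_branch f1 g1 v f); [| exact Hf | rewrite Hfg; exact E].
    replace (v * v) with (P + Q + 3 * (u * u)) by lia.
    rewrite Hfg. lia.
Qed.

(* First half of a descent step: for f coprime to 2h,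
   M^2 = quartic f (2h) means (f^2 + 6h^2)^2 - M^2 = 20 h^4, giving coprime
   positive A, B with A B = 5 h^4 and A + B = f^2 + 6h^2. *)
Lemma even_case_factorization f h M :
  Z.gcd f (2 * h) = 1 -> h <> 0 -> M * M = quartic f (2 * h) ->
  exists A B, 0 < A /\ 0 < B /\ Z.gcd A B = 1 /\
              A * B = 5 * (h * h * h * h) /\ A + B = f * f + 6 * (h * h).
Proof.
  intros Hg Hh E.
  destruct (half_factorization (f * f + 6 * (h * h)) M (5 * (h * h * h * h)))
    as [A [B [EAB [HX _]]]].
  { transitivity ((f * f + 6 * (h * h)) ^ 2 - M * M); [ring|].
    rewrite E. unfold quartic. ring. }
  assert (Hh4 : 0 < h * h * h * h) by (assert (0 < h * h) by nia; nia).
  assert (HA : 0 < A) by nia.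
  assert (HB : 0 < B) by nia.
  exists A, B. repeat split; [exact HA | exact HB | | exact EAB | lia].
  apply coprime_intro. intros d DA DB.
  assert (Hdh : Z.gcd d h = 1).
  { apply coprime_intro. intros c Cd Ch.
    apply (coprime_common_divisor (f * f) (2 * h));
      [rewrite Z.gcd_comm; apply coprime_mul_r; rewrite Z.gcd_comm; exact Hg | |].
    - replace (f * f) with (A + B - 6 * (h * h)) by lia.
      apply Z.divide_sub_r; [apply Z.divide_add_r|]; try (apply (Z.divide_trans _ d); assumption).
      apply Z.divide_mul_r, Z.divide_mul_l. exact Ch.
    - apply Z.divide_mul_r. exact Ch. }
  assert (Hdh4 : Z.gcd d (h * h * h * h) = 1) by (repeat apply coprime_mul_r; exact Hdh).
  destruct (Zdivide_dec 5 d) as [D5 | ND5].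
  - exfalso.
    assert (H5 : (5 | h * h * h * h)).
    { destruct (Z.divide_trans _ _ _ D5 DA) as [a Ha].
      destruct (Z.divide_trans _ _ _ D5 DB) as [b Hb].
      exists (a * b). rewrite Ha, Hb in EAB. lia. }
    pose proof (coprime_common_divisor _ _ _ Hdh4 D5 H5) as H1.
    apply Z.divide_1_r in H1. lia.
  - apply (coprime_common_divisor d (5 * (h * h * h * h))); [| apply Z.divide_refl |].
    + apply coprime_mul_r; [| exact Hdh4].
      rewrite Z.gcd_comm. apply Zgcd_1_rel_prime, prime_rel_prime; [exact prime_5 | exact ND5].
    + rewrite <- EAB. apply Z.divide_mul_l. exact DA.
Qed.

Lemma five_fourth_split A B h :
  0 < A -> 0 < B -> Z.gcd A B = 1 -> (5 | A) -> A * B = 5 * (h * h * h * h) ->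
  exists u v, 0 <= u /\ 0 <= v /\ Z.gcd u v = 1 /\
              A + B = 5 * u^4 + v^4 /\ u * v * (u * v) = h * h.
Proof.
  intros HA HB Hg [a Ha] E. subst A.
  assert (Hg' : Z.gcd a B = 1).
  { apply coprime_intro. intros d D1 D2. apply (coprime_common_divisor (a * 5) B);
      [exact Hg | apply Z.divide_mul_l; exact D1 | exact D2]. }
  destruct (coprime_product_fourth_power a B h) as [u [v [Hu [Hv [Eu [Ev Euv]]]]]];
    [lia | lia | exact Hg' | lia |].
  exists u, v. repeat split; [exact Hu | exact Hv | | rewrite Eu, Ev; ring | exact Euv].
  apply coprime_intro. intros d D1 D2. apply (coprime_common_divisor a B); [exact Hg' | |].
  - rewrite Eu. do 3 apply Z.divide_mul_l. exact D1.
  - rewrite Ev. do 3 apply Z.divide_mul_l. exact D2.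
Qed.

(* A descent step for a coprime solution with odd f and even 2h: a new
   nonzero solution (f1, g1) with |f1 g1| = u <= |h| < |f (2h)|. *)
Lemma even_case_step f h M :
  Z.gcd f (2 * h) = 1 -> Z.Odd f -> h <> 0 -> M * M = quartic f (2 * h) ->
  exists f1 g1 M1, f1 <> 0 /\ g1 <> 0 /\ Z.abs (f1 * g1) < Z.abs (f * (2 * h)) /\
                   M1 * M1 = quartic f1 g1.
Proof.
  intros Hg Hf Hh E.
  destruct (even_case_factorization f h M Hg Hh E) as [A [B [HA [HB [HgAB [EAB HAB]]]]]].
  assert (Hsplit : exists u v, 0 <= u /\ 0 <= v /\ Z.gcd u v = 1 /\
                   A + B = 5 * u^4 + v^4 /\ u * v * (u * v) = h * h).
  { destruct (prime_mult 5 prime_5 A B) as [H5 | H5]; [exists (h * h * h * h); lia | |].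
    - exact (five_fourth_split A B h HA HB HgAB H5 EAB).
    - rewrite Z.add_comm. apply (five_fourth_split B A h); try assumption.
      + rewrite Z.gcd_comm. exact HgAB.
      + lia. }
  destruct Hsplit as [u [v [Hu [Hv [Huv [Esum Eh]]]]]].
  assert (Hu0 : u <> 0) by (intros ->; nia).
  destruct (odd_case_step u v f Hu Hv Huv Hu0 Hf) as [f1 [g1 [F1 [G1 [Efg Ev]]]]]; [nia|].
  exists f1, g1, v. repeat split; [exact F1 | exact G1 | | exact Ev].
  assert (Hv1 : 1 <= v) by (destruct (Z.eq_dec v 0); [subst; nia | lia]).
  assert (Hf1 : 1 <= Z.abs f) by (destruct Hf; lia).
  assert (Habs : u * v = Z.abs h)
    by (apply square_inj_nonneg; [nia | lia | rewrite Z.abs_square; exact Eh]).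
  rewrite Efg, Z.abs_mul, (Z.abs_mul 2), Z.abs_eq by lia. nia.
Qed.

(* Every nonzero solution of z^2 = quartic x y yields one with smaller |x y|:
   divide out gcd(x, y), or, in the coprime case, exclude the odd/odd parity
   and apply even_case_step. *)
Lemma quartic_descent_step f g M :
  f <> 0 -> g <> 0 -> M * M = quartic f g ->
  exists f1 g1 M1, f1 <> 0 /\ g1 <> 0 /\ Z.abs (f1 * g1) < Z.abs (f * g) /\
                   M1 * M1 = quartic f1 g1.
Proof.
  intros Hf Hg E.
  assert (Hd : Z.gcd f g <> 0) by (intros H; apply Z.gcd_eq_0 in H; lia).
  pose proof (Z.gcd_nonneg f g).
  destruct (Z.eq_dec (Z.gcd f g) 1) as [Hg1 | Hg1].
  - destruct (Z.Even_or_Odd f) as [Ef | Of]; destruct (Z.Even_or_Odd g) as [Eg | Og].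
    + exfalso. exact (coprime_not_both_even f g Hg1 Ef Eg).
    + destruct Ef as [k ->].
      destruct (even_case_step g k M) as [f1 [g1 [M1 [F1 [G1 [Hlt E1]]]]]];
        [rewrite Z.gcd_comm; exact Hg1 | exact Og | lia | rewrite quartic_sym; exact E |].
      exists f1, g1, M1. rewrite (Z.mul_comm (2 * k)). auto.
    + destruct Eg as [k ->].
      exact (even_case_step f k M Hg1 Of ltac:(lia) E).
    + exfalso. exact (quartic_odd_odd f g M Of Og E).
  - destruct (gcd_factor f g Hd) as [f' [g' [Hf' [Hg' _]]]].
    set (d := Z.gcd f g) in *.
    destruct (square_quotient (d * d) (quartic f' g') M) as [M' HM']; [nia | |].
    { rewrite E, Hf', Hg'. unfold quartic. ring. }
    exists f', g', M'. repeat split; [intros ->; lia | intros ->; lia | | symmetry; exact HM'].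
    rewrite Hf', Hg', !Z.abs_mul, (Z.abs_eq d) by lia.
    assert (0 < Z.abs f' * Z.abs g') by (rewrite <- Z.abs_mul; apply Z.abs_pos; nia).
    nia.
Qed.

Lemma quartic_not_square f g M : f <> 0 -> g <> 0 -> M * M <> quartic f g.
Proof.
  intros Hf Hg E.
  assert (Hbound : forall n : nat, forall f g M, Z.abs (f * g) < Z.of_nat n ->
            f <> 0 -> g <> 0 -> M * M <> quartic f g).
  { induction n as [|n IH]; intros f1 g1 M1 Hn Hf1 Hg1 E1; [lia|].
    destruct (quartic_descent_step f1 g1 M1 Hf1 Hg1 E1) as [f2 [g2 [M2 [F2 [G2 [Hlt E2]]]]]].
    apply (IH f2 g2 M2); [lia | assumption..]. }
  apply (Hbound (S (Z.to_nat (Z.abs (f * g)))) f g M); [lia | assumption..].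
Qed.

(* A sum of two odd squares is 2 mod 8, hence not a square. *)
Lemma odd_squares_sum_not_square x y z : Z.Odd x -> Z.Odd y -> z * z <> x * x + y * y.
Proof.
  intros Hx Hy E.
  destruct (odd_square x Hx) as [i Hi]. destruct (odd_square y Hy) as [j Hj].
  destruct (square_mod8 z) as [[m Hm]|[m Hm]]; lia.
Qed.

(* The identity gluing two Pythagorean triples with a common even leg:
   if (p^2 - q^2) + (r^2 - s^2) = 2rs and pq = rs then
   q^2 quartic s q = ((s^2 + q^2) r - s q^2)^2. *)
Lemma two_triangles_identity p q r s :
  p * p - q * q + (r * r - s * s) = 2 * (r * s) -> p * q = r * s ->
  q * q * quartic s q = ((s * s + q * q) * r - s * (q * q)) ^ 2.
Proof.
  intros Hsum Hpq.
  assert (K : (r * r - q * q) * (s * s + q * q) = 2 * (r * s) * (q * q)).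
  { transitivity ((p * p - q * q + (r * r - s * s)) * (q * q)
                  - (p * q) * (p * q) + (r * s) * (r * s));
      [ring | rewrite Hsum, Hpq; ring]. }
  transitivity (q * q * quartic s q + (s * s + q * q)
                  * ((r * r - q * q) * (s * s + q * q) - 2 * (r * s) * (q * q)));
    [rewrite K; ring | unfold quartic; ring].
Qed.

Lemma coprime_with_sum a b : Z.gcd a b = 1 -> Z.gcd a (a + b) = 1.
Proof.
  intros Hg. apply coprime_intro. intros d D1 D2. apply (coprime_common_divisor a b d Hg D1).
  replace b with (a + b - a) by ring. apply Z.divide_sub_r; assumption.
Qed.

(* Parity forces a, b odd; the two Pythagorean
   triples with even leg a + b then produce a solution of the quartic. *)
Lemma no_coprime_edge_triple a b U V :
  Z.gcd a b = 1 -> 0 <= a -> 0 <= b ->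
  U * U = a * a + (a + b) * (a + b) -> V * V = b * b + (a + b) * (a + b) -> False.
Proof.
  intros Hg Ha Hb EU EV.
  destruct (Z.Even_or_Odd a) as [[k Hk] | [k Hk]];
    destruct (Z.Even_or_Odd b) as [[l Hl] | [l Hl]].
  - exact (coprime_not_both_even a b Hg (ex_intro _ k Hk) (ex_intro _ l Hl)).
  - apply (odd_squares_sum_not_square b (a + b) V); [exists l | exists (k + l) | ]; lia.
  - apply (odd_squares_sum_not_square a (a + b) U); [exists k | exists (k + l) | ]; lia.
  - set (h := k + l + 1).
    assert (Hc : a + b = 2 * h) by (unfold h; lia).
    rewrite Hc in EU, EV.
    destruct (pythagorean_parametrization a h U) as [p [q [Hp [Hq [Ea Epq]]]]];
      [exact Ha | rewrite <- Hc; apply coprime_with_sum; exact Hg | lia | exact EU |].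
    destruct (pythagorean_parametrization b h V) as [r [s [Hr [Hs [Eb Ers]]]]];
      [exact Hb | rewrite <- Hc, Z.add_comm; apply coprime_with_sum;
                  rewrite Z.gcd_comm; exact Hg | lia | exact EV |].
    assert (Hq0 : q <> 0) by (intros ->; lia).
    assert (Hs0 : s <> 0) by (intros ->; lia).
    destruct (square_quotient q (quartic s q) ((s * s + q * q) * r - s * (q * q)))
      as [M HM]; [exact Hq0 | rewrite (two_triangles_identity p q r s); [ring | lia | lia] |].
    exact (quartic_not_square s q M Hs0 Hq0 (eq_sym HM)).
Qed.

(* The integer form of an edge point: no 0 <= a <= c, 0 < c with
   a^2 + c^2 and (c - a)^2 + c^2 both squares (reduce by gcd(a, c - a)). *)
Lemma no_integer_edge_point a c U V :
  0 <= a -> a <= c -> 0 < c ->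
  U * U = a * a + c * c -> V * V = (c - a) * (c - a) + c * c -> False.
Proof.
  intros Ha Hac Hc EU EV.
  assert (Hd : Z.gcd a (c - a) <> 0) by (intros H; apply Z.gcd_eq_0 in H; lia).
  pose proof (Z.gcd_nonneg a (c - a)).
  destruct (gcd_factor a (c - a) Hd) as [a' [b' [Ha' [Hb' Hg']]]].
  set (d := Z.gcd a (c - a)) in *.
  assert (Hcd : c = (a' + b') * d) by lia.
  destruct (square_quotient d (a' * a' + (a' + b') * (a' + b')) U) as [U' HU'];
    [exact Hd | rewrite EU, Ha', Hcd; ring |].
  destruct (square_quotient d (b' * b' + (a' + b') * (a' + b')) V) as [V' HV'];
    [exact Hd | rewrite EV, Hb', Hcd; ring |].
  apply (no_coprime_edge_triple a' b' U' V'); [exact Hg' | nia | nia | lia | lia].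
Qed.

(* The same statement after clearing the denominators td, ad, bd of the
   parameter t = tn/td and of the two distances an/ad, bn/bd. *)
Lemma no_scaled_edge_point tn td an ad bn bd :
  0 <= tn <= td -> 0 < td -> 0 < ad -> 0 < bd ->
  an * td * (an * td) = tn * ad * (tn * ad) + td * ad * (td * ad) ->
  bn * td * (bn * td) = (td - tn) * bd * ((td - tn) * bd) + td * bd * (td * bd) -> False.
Proof.
  intros Ht Htd Had Hbd EA EB.
  apply (no_integer_edge_point (tn * ad * bd) (td * ad * bd) (an * td * bd) (bn * td * ad));
    [nia | nia | nia | |].
  - transitivity (an * td * (an * td) * (bd * bd)); [ring | rewrite EA; ring].
  - transitivity (bn * td * (bn * td) * (ad * ad)); [ring | rewrite EB; ring].
Qed.

Local Open Scope R_scope.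

Lemma clear_denominators n d m e : d <> 0 -> e <> 0 ->
  (m / e) * (m / e) = (n / d) * (n / d) + 1 -> m * d * (m * d) = n * e * (n * e) + d * e * (d * e).
Proof.
  intros Hd He E.
  assert (Hscale : m * d * (m * d) - (n * e * (n * e) + d * e * (d * e))
                   = ((m / e) * (m / e) - ((n / d) * (n / d) + 1)) * (d * e) * (d * e))
    by (field; split; assumption).
  rewrite E in Hscale. lra.
Qed.

Lemma no_rational_edge_point (t A B : Q) : 0 <= Q2R t <= 1 ->
  Q2R A * Q2R A = Q2R t * Q2R t + 1 ->
  Q2R B * Q2R B = (1 - Q2R t) * (1 - Q2R t) + 1 -> False.
Proof.
  destruct t as [tn td], A as [an ad], B as [bn bd]. unfold Q2R; cbn [Qnum Qden].
  assert (Hpos : forall p, 0 < IZR (Z.pos p)) by (intros p; apply IZR_lt; lia).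
  pose proof (Hpos td) as HT. pose proof (Hpos ad) as HA. pose proof (Hpos bd) as HB.
  intros [H0 H1] EA EB.
  apply (no_scaled_edge_point tn (Z.pos td) an (Z.pos ad) bn (Z.pos bd)); [split | lia..| |].
  - apply le_IZR. apply (Rmult_le_reg_r (/ IZR (Z.pos td))); [apply Rinv_0_lt_compat; lra | lra].
  - apply le_IZR. apply (Rmult_le_reg_r (/ IZR (Z.pos td))); [apply Rinv_0_lt_compat; lra|].
    rewrite Rinv_r; lra.
  - apply eq_IZR. rewrite !plus_IZR, !mult_IZR.
    apply clear_denominators; [lra | lra | exact EA].
  - apply eq_IZR. rewrite !plus_IZR, !mult_IZR, minus_IZR.
    apply clear_denominators; [lra | lra |].
    unfold Rdiv. rewrite EB. field. lra.
Qed.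

Lemma rational_sqrt_eq a b : a = b -> is_rational (sqrt a) -> is_rational (sqrt b).
Proof. now intros ->. Qed.

Lemma boundary_reduction P :
  on_square_boundary P ->
  is_rational (dist2 P ptA) -> is_rational (dist2 P ptB) ->
  is_rational (dist2 P ptC) -> is_rational (dist2 P ptD) ->
  exists s, 0 <= s <= 1 /\ is_rational s /\
            is_rational (sqrt (s ^ 2 + 1)) /\ is_rational (sqrt ((1 - s) ^ 2 + 1)).
Proof.
  destruct P as [x y].
  unfold on_square_boundary, dist2, ptA, ptB, ptC, ptD; cbn [fst snd].
  intros [[Hx ->] | [[-> Hy] | [[Hx ->] | [-> Hy]]]] HPA HPB HPC HPD.
  - exists x. split; [exact Hx | repeat split].
    + rewrite <- (sqrt_pow2 x) by lra. revert HPA. apply rational_sqrt_eq. ring.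
    + revert HPD. apply rational_sqrt_eq. ring.
    + revert HPC. apply rational_sqrt_eq. ring.
  - exists y. split; [exact Hy | repeat split].
    + rewrite <- (sqrt_pow2 y) by lra. revert HPB. apply rational_sqrt_eq. ring.
    + revert HPA. apply rational_sqrt_eq. ring.
    + revert HPD. apply rational_sqrt_eq. ring.
  - exists x. split; [exact Hx | repeat split].
    + rewrite <- (sqrt_pow2 x) by lra. revert HPD. apply rational_sqrt_eq. ring.
    + revert HPA. apply rational_sqrt_eq. ring.
    + revert HPB. apply rational_sqrt_eq. ring.
  - exists y. split; [exact Hy | repeat split].
    + rewrite <- (sqrt_pow2 y) by lra. revert HPA. apply rational_sqrt_eq. ring.
    + revert HPB. apply rational_sqrt_eq. ring.
    + revert HPC. apply rational_sqrt_eq. ring.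
Qed.

Lemma no_rational_edge_parameter s :
  0 <= s <= 1 -> is_rational s ->
  is_rational (sqrt (s ^ 2 + 1)) -> is_rational (sqrt ((1 - s) ^ 2 + 1)) -> False.
Proof.
  intros Hs [t Ht] [A HA] [B HB].
  apply (no_rational_edge_point t A B); rewrite ?Ht, ?HA, ?HB; [exact Hs | |];
    rewrite sqrt_sqrt by nra; ring.
Qed.

Theorem theorem1 :
  ~ (exists P : R * R,
       on_square_boundary P /\
       is_rational (dist2 P ptA) /\ is_rational (dist2 P ptB) /\
       is_rational (dist2 P ptC) /\ is_rational (dist2 P ptD)).
Proof.
  intros [P [HP [HA [HB [HC HD]]]]].
  destruct (boundary_reduction P HP HA HB HC HD) as [s [Hs [Hrat [H1 H2]]]].
  exact (no_rational_edge_parameter s Hs Hrat H1 H2).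
Qed.
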